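(* Let $\mathcal H$ be a well-structured preconditioner set and $\{f_t\}_{t\in\mathcal T}$ a family of random differentiable functions $\mathbb R^d\to\mathbb R$. Then $$\sigma_{\|\cdot\|_{\mathcal H,*}}(\{f_t\}_{t\in\mathcal T})^2\le\sigma_{\mathcal H}(\{f_t\}_{t\in\mathcal T})^2\le d\cdot\sigma_{\|\cdot\|_{\mathcal H,*}}(\{f_t\}_{t\in\mathcal T})^2.$$
   Context: $\mathcal S^d_+$ (resp. $\mathcal S^d_{++}$) denotes the set of real symmetric positive semidefinite (resp. positive definite) $d\times d$ matrices. A set $\mathcal H\subseteq\mathcal S_+^d$ is a well-structured preconditioner set if $\mathcal H=\mathcal S_+^d\cap\mathcal K$ for some set $\mathcal K$ of real $d\times d$ matrices that is closed under scalar multiplication, matrix addition and matrix multiplication and contains the identity $I_d$. For $H\in\mathcal S_+^d$, $\|x\|_H=\sqrt{x^\top Hx}$; $\|x\|_{\mathcal H}:=\sup_{H\in\mathcal H,\operatorname{Tr}(H)\le1}\|x\|_H$ and $\|y\|_{\mathcal H,*}:=\sup_{\|x\|_{\mathcal H}\le1}\langle x,y\rangle$. For a norm $\|\cdot\|$: $\sigma_{\|\cdot\|}(\{f_t\})^2:=\sup_{t\in\mathcal T,x\in\mathbb R^d}\mathbb E\|\nabla f_t(x)-\mathbb E[\nabla f_t(x)]\|^2$. Adaptive gradient variance: $\sigma_{\mathcal H}(\{f_t\})^2:=\inf_{H\in\mathcal H\cap\mathcal S^d_{++},\operatorname{Tr}(H)\le1}\sup_{t\in\mathcal T,x\in\mathbb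 R^d}\mathbb E\|\nabla f_t(x)-\mathbb E[\nabla f_t(x)]\|_{H^{-1}}^2$. *)

From HB Require Import structures.
From mathcomp Require Import all_boot all_order all_algebra.
From mathcomp Require Import all_classical all_reals all_analysis.
Set Implicit Arguments. Unset Strict Implicit. Unset Printing Implicit Defensive.
Import Order.TTheory GRing.Theory Num.Theory.
Import numFieldNormedType.Exports.
Local Open Scope classical_set_scope.
Local Open Scope ring_scope.

(* Vectors of R^d are row vectors 'rV[R]_d; x^T H x is (x *m H *m x^T) 0 0. *)
Definition quadf {R : realType} {d : nat} (A : 'M[R]_d) (x : 'rV[R]_d) : R :=
  (x *m A *m x^T) 0 0.

Definition psd {R : realType} {d : nat} (A : 'M[R]_d) : Prop :=
  A^T = A /\ forall x : 'rV[R]_d, 0 <= quadf A x.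

Definition pd {R : realType} {d : nat} (A : 'M[R]_d) : Prop :=
  A^T = A /\ forall x : 'rV[R]_d, x != 0 -> 0 < quadf A x.

Definition well_structured {R : realType} {d : nat} (H : set 'M[R]_d) : Prop :=
  exists K : set 'M[R]_d,
    [/\ (forall (a : R) A, K A -> K (a *: A)),
        (forall A B, K A -> K B -> K (A + B)),
        (forall A B, K A -> K B -> K (A *m B)),
        K 1%:M &
        H = [set A | psd A /\ K A]].

Definition Anorm {R : realType} {d : nat} (A : 'M[R]_d) (x : 'rV[R]_d) : R :=
  Num.sqrt (quadf A x).

Definition Hnorm {R : realType} {d : nat} (H : set 'M[R]_d) (x : 'rV[R]_d) : R :=
  sup [set Anorm A x | A in [set A | H A /\ \tr A <= 1]].

Definition Hdualnorm {R : realType} {d : nat} (H : set 'M[R]_d) (y : 'rV[R]_d) : R :=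
  sup [set (x *m y^T) 0 0 | x in [set x | Hnorm H x <= 1]].

Definition grad {R : realType} {d : nat} (F : 'rV[R]_d -> R) (x : 'rV[R]_d)
  : 'rV[R]_d := \row_i ('d F x (delta_mx 0 i)).

Section Variance.
Context {R : realType} {d : nat} {dsp : measure_display} {Omega : measurableType dsp}.
Variable (P : probability Omega R) (T : Type) (f : T -> Omega -> 'rV[R]_d -> R).

Definition mean_grad (t : T) (x : 'rV[R]_d) : 'rV[R]_d :=
  \row_i fine (\int[P]_w (grad (f t w) x 0 i)%:E)%E.

Definition cgrad (t : T) (x : 'rV[R]_d) (w : Omega) : 'rV[R]_d :=
  grad (f t w) x - mean_grad t x.

Definition sigma2_norm (N : 'rV[R]_d -> R) : \bar R :=
  ereal_sup [set v | exists (t : T) (x : 'rV[R]_d),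
              v = (\int[P]_w ((N (cgrad t x w)) ^+ 2)%:E)%E].

Definition sigma2_mat (A : 'M[R]_d) : \bar R :=
  ereal_sup [set v | exists (t : T) (x : 'rV[R]_d),
              v = (\int[P]_w (quadf (invmx A) (cgrad t x w))%:E)%E].

Definition sigma2_adaptive (H : set 'M[R]_d) : \bar R :=
  ereal_inf [set sigma2_mat A | A in [set A | H A /\ pd A /\ \tr A <= 1]].

End Variance.

From HB Require Import structures.
From mathcomp Require Import all_boot all_order all_algebra.
From mathcomp Require Import all_classical all_reals all_analysis.
From mathcomp Require Import ring.
Set Implicit Arguments. Unset Strict Implicit. Unset Printing Implicit Defensive.
Import Order.TTheory GRing.Theory Num.Theory.
Import numFieldNormedType.Exports.
Local Open Scope classical_set_scope.
Local Open Scope ring_scope.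

(* Every admissible preconditioner A (psd, Tr A <= 1) satisfies x^T A x <= Tr A |x|^2 <= |x|^2,
   so ||x||_H <= |x| and dually |y| <= ||y||_{H,*}.  Conversely, for A in H positive definite
   with Tr A <= 1 and ||x||_H <= 1, Cauchy-Schwarz in the A-inner product gives
   <x, y>^2 <= (x^T A x)(y^T A^-1 y) <= y^T A^-1 y, i.e. ||y||_{H,*}^2 <= ||y||_{A^-1}^2; this is
   the lower bound.  For the upper bound, well-structuredness puts A = I/d in H, and
   ||y||_{A^-1}^2 = d |y|^2 <= d ||y||_{H,*}^2. *)

Section QuadraticForms.
Variables (R : realType) (d : nat).
Implicit Types (A : 'M[R]_d) (u v x y : 'rV[R]_d).

Definition bilf A u v := (u *m A *m v^T) 0 0.

Definition sqnorm x := (x *m x^T) 0 0.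

Lemma bilfC A u v : A^T = A -> bilf A v u = bilf A u v.
Proof.
move=> sA; rewrite /bilf.
have -> : (v *m A *m u^T) 0 0 = (v *m A *m u^T)^T 0 0 by rewrite [RHS]mxE.
by rewrite trmx_mul trmxK trmx_mul sA mulmxA.
Qed.

Lemma quadfDZ A u v s : A^T = A ->
  quadf A (u + s *: v) = quadf A u + 2 * s * bilf A u v + s ^+ 2 * quadf A v.
Proof.
move=> sA; rewrite /quadf linearD linearZ /= !mulmxDl !mulmxDr.
rewrite -!scalemxAl -!scalemxAr.
have := bilfC u v sA; rewrite /bilf !mxE => ->.
ring.
Qed.

(* The quadratic s |-> quadf A (u + s v) is nonnegative, so its discriminant is not positive. *)
Lemma bilf_sqr_le A u v : psd A -> bilf A u v ^+ 2 <= quadf A u * quadf A v.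
Proof.
case=> sA pA.
have nonneg s : 0 <= quadf A u + 2 * s * bilf A u v + s ^+ 2 * quadf A v.
  by rewrite -quadfDZ //; exact: pA.
have a0 := pA u; have c0 := pA v.
move: nonneg a0 c0; move: (quadf A u) (bilf A u v) (quadf A v) => a b c nonneg a0 c0.
have [c_0|c_neq0] := eqVneq c 0.
  subst c; rewrite mulr0.
  have [->|b_neq0] := eqVneq b 0; first by rewrite expr0n.
  have := nonneg (- ((a + 1) / (2 * b))).
  have -> : a + 2 * - ((a + 1) / (2 * b)) * b + (- ((a + 1) / (2 * b))) ^+ 2 * 0 = -1.
    by field; rewrite b_neq0.
  by rewrite ler0N1.
have c_gt0 : 0 < c by rewrite lt0r c_neq0.
have := nonneg (- (b / c)).
have -> : a + 2 * - (b / c) * b + (- (b / c)) ^+ 2 * c = (a * c - b ^+ 2) / c.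
  by field.
by rewrite pmulr_lge0 ?invr_gt0 // subr_ge0 mulrC.
Qed.

Lemma mulmx_trdelta_mx (M : 'rV[R]_d) (j : 'I_d) :
  (M *m (delta_mx 0 j : 'rV[R]_d)^T) 0 0 = M 0 j.
Proof.
rewrite mxE (bigD1 j) //= big1 => [|k kj]; rewrite !mxE ?eqxx /=.
  by rewrite mulr1 addr0.
by rewrite (negbTE kj) mulr0.
Qed.

Lemma quadf_delta_mx A (j : 'I_d) : quadf A (delta_mx 0 j) = A j j.
Proof. by rewrite /quadf -rowE mulmx_trdelta_mx mxE. Qed.

Lemma sqnorm_sum x : sqnorm x = \sum_j x 0 j ^+ 2.
Proof.
by rewrite /sqnorm mxE; under eq_bigr => j _ do rewrite [x^T _ _]mxE -expr2.
Qed.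

Lemma sqnorm_ge0 x : 0 <= sqnorm x.
Proof. by rewrite sqnorm_sum; apply: sumr_ge0 => j _; exact: sqr_ge0. Qed.

Lemma quadf_scalar a x : quadf a%:M x = a * sqnorm x.
Proof.
rewrite /quadf mul_mx_scalar -scalemxAl /sqnorm.
by move: (x *m x^T) => M; rewrite mxE.
Qed.

Lemma psd_scalar a : 0 <= a -> psd (a%:M : 'M[R]_d).
Proof.
move=> a_ge0; split; first exact: tr_scalar_mx.
by move=> x; rewrite quadf_scalar mulr_ge0 ?sqnorm_ge0.
Qed.

Lemma mxtrace_psd_ge0 A : psd A -> 0 <= \tr A.
Proof.
by case=> _ pA; apply: sumr_ge0 => j _; rewrite -quadf_delta_mx.
Qed.

Lemma sqnorm_mulmx_le A x : psd A -> sqnorm (x *m A) <= \tr A * quadf A x.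
Proof.
move=> pA; rewrite sqnorm_sum mulrC /mxtrace mulr_sumr; apply: ler_sum => j _.
have := bilf_sqr_le x (delta_mx 0 j) pA.
by rewrite /bilf mulmx_trdelta_mx quadf_delta_mx.
Qed.

(* Cauchy-Schwarz for the identity form applied to x and x A gives
   quadf A x ^+ 2 <= sqnorm x * sqnorm (x A) <= sqnorm x * \tr A * quadf A x. *)
Lemma quadf_le_mxtrace A x : psd A -> quadf A x <= \tr A * sqnorm x.
Proof.
move=> pA; have [sA qA] := pA.
have cs := bilf_sqr_le x (x *m A) (psd_scalar (@ler01 R)).
have bilf1_eq : bilf 1%:M x (x *m A) = quadf A x.
  by rewrite /bilf /quadf mulmx1 trmx_mul sA mulmxA.
rewrite bilf1_eq !quadf_scalar !mul1r in cs.
have sq_le : quadf A x * quadf A x <= quadf A x * (\tr A * sqnorm x).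
  rewrite -expr2 (le_trans cs) // mulrCA mulrC mulrA ler_wpM2r ?sqnorm_ge0 //.
  exact: sqnorm_mulmx_le.
have [q_eq0|q_neq0] := eqVneq (quadf A x) 0.
  by rewrite q_eq0 mulr_ge0 ?sqnorm_ge0 ?mxtrace_psd_ge0.
by rewrite -(ler_pM2l (_ : 0 < quadf A x)) // lt0r q_neq0 qA.
Qed.

Lemma pd_unitmx A : pd A -> A \in unitmx.
Proof.
case=> _ pA; rewrite unitmxE unitfE; apply/negP => /det0P [v v0 vA].
by have := pA v v0; rewrite /quadf vA mul0mx mxE ltxx.
Qed.

Lemma quadf_mulmx_invmx A y : A^T = A -> A \in unitmx ->
  quadf A (y *m invmx A) = quadf (invmx A) y.
Proof. by move=> sA uA; rewrite /quadf mulmxKV // trmx_mul trmx_inv sA mulmxA. Qed.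

(* Cauchy-Schwarz in the A-inner product, applied to x and y A^-1. *)
Lemma dotmx_sqr_le A x y : psd A -> A \in unitmx ->
  ((x *m y^T) 0 0) ^+ 2 <= quadf A x * quadf (invmx A) y.
Proof.
move=> pA uA; have sA := pA.1.
have := bilf_sqr_le x (y *m invmx A) pA.
rewrite quadf_mulmx_invmx //.
by rewrite /bilf trmx_mul trmx_inv sA !mulmxA -(mulmxA x A) mulmxV // mulmx1.
Qed.

Lemma rV_neq0_coord x : x != 0 -> exists j, x 0 j != 0.
Proof.
move=> x_neq0; apply/existsP; apply: contraNT x_neq0 => /existsPn x0.
by apply/eqP/matrixP => i k; rewrite (ord1 i) mxE; apply/eqP/negPn/x0.
Qed.

Lemma sqnorm_gt0 x : x != 0 -> 0 < sqnorm x.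
Proof.
move=> /rV_neq0_coord[j xj]; rewrite sqnorm_sum (bigD1 j) //=.
by rewrite ltr_wpDr ?exprn_even_gt0 //; apply: sumr_ge0 => i _; exact: sqr_ge0.
Qed.

(* For d = 0 every matrix is vacuously positive definite, although d^-1 = 0. *)
Lemma pd_scalar_invdim : pd ((d%:R^-1)%:M : 'M[R]_d).
Proof.
split; first exact: tr_scalar_mx.
move=> x x_neq0; have [j _] := rV_neq0_coord x_neq0.
by rewrite quadf_scalar mulr_gt0 ?sqnorm_gt0 // invr_gt0 ltr0n (leq_ltn_trans _ (ltn_ord j)).
Qed.

Lemma mxtrace_scalar_invdim : \tr ((d%:R^-1)%:M : 'M[R]_d) <= 1.
Proof.
rewrite mxtrace_scalar -[X in X *+ d]mulr1 -mulrnAr.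
by have [->|d_neq0] := eqVneq (d%:R : R) 0; rewrite ?mulr0 ?mulVf.
Qed.

End QuadraticForms.

Section PreconditionerNorms.
Variables (R : realType) (d : nat) (H : set 'M[R]_d).
Hypotheses (H_psd : forall A, H A -> psd A) (H0 : H 0).
Implicit Types (A : 'M[R]_d) (x y : 'rV[R]_d).

Let Hnorm_set x := [set Anorm A x | A in [set A | H A /\ \tr A <= 1]].

Lemma Hnorm_set_ub x : ubound (Hnorm_set x) (Num.sqrt (sqnorm x)).
Proof.
move=> _ [A [HA trA] <-]; rewrite /Anorm ler_wsqrtr //.
apply: le_trans (quadf_le_mxtrace x (H_psd HA)) _.
by rewrite ler_piMl ?sqnorm_ge0.
Qed.

Lemma Hnorm_set_neq0 x : Hnorm_set x !=set0.
Proof. by exists (Anorm 0 x); exists 0 => //; split; rewrite ?mxtrace0. Qed.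

Lemma Hnorm_le_sqrt_sqnorm x : Hnorm H x <= Num.sqrt (sqnorm x).
Proof. exact: ge_sup (Hnorm_set_neq0 x) (@Hnorm_set_ub x). Qed.

Lemma Hnorm0_le1 : Hnorm H 0 <= 1.
Proof.
apply: le_trans (Hnorm_le_sqrt_sqnorm 0) _.
by rewrite /sqnorm mul0mx mxE sqrtr0.
Qed.

Lemma quadf_le1_of_Hnorm_le1 A x :
  H A -> \tr A <= 1 -> Hnorm H x <= 1 -> quadf A x <= 1.
Proof.
move=> HA trA Hx_le1; have q_ge0 := (H_psd HA).2 x.
have Anorm_le : Anorm A x <= Hnorm H x.
  apply: sup_upper_bound; last by exists A.
  by split; [exact: Hnorm_set_neq0 | exists (Num.sqrt (sqnorm x)); exact: Hnorm_set_ub].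
rewrite -(sqr_sqrtr q_ge0) -(expr1n _ 2).
by rewrite ler_pXn2r ?nnegrE ?sqrtr_ge0 // (le_trans Anorm_le).
Qed.

Lemma dotmx_sqr_le_quadf_invmx A x y : H A -> pd A -> \tr A <= 1 ->
  Hnorm H x <= 1 -> ((x *m y^T) 0 0) ^+ 2 <= quadf (invmx A) y.
Proof.
move=> HA pdA trA Hx_le1; have pA := H_psd HA.
have Ainv_ge0 : 0 <= quadf (invmx A) y.
  by rewrite -quadf_mulmx_invmx ?pd_unitmx //; [exact: pA.2 | exact: pA.1].
apply: le_trans (dotmx_sqr_le x y pA (pd_unitmx pdA)) _.
by rewrite ler_piMl // quadf_le1_of_Hnorm_le1.
Qed.

Variable A0 : 'M[R]_d.
Hypotheses (HA0 : H A0) (pdA0 : pd A0) (trA0 : \tr A0 <= 1).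

Let Hdual_set y := [set (x *m y^T) 0 0 | x in [set x | Hnorm H x <= 1]].

Lemma Hdual_set_ub y : ubound (Hdual_set y) (Num.sqrt (quadf (invmx A0) y)).
Proof.
move=> _ [x Hx_le1 <-]; apply: le_trans (ler_norm _) _.
by rewrite -sqrtr_sqr ler_wsqrtr // dotmx_sqr_le_quadf_invmx.
Qed.

Lemma Hdual_set_has_sup y : has_sup (Hdual_set y).
Proof.
split; first by exists (((0 : 'rV[R]_d) *m y^T) 0 0); exists 0 => //; exact: Hnorm0_le1.
by exists (Num.sqrt (quadf (invmx A0) y)); exact: Hdual_set_ub.
Qed.

Lemma Hdualnorm_ge0 y : 0 <= Hdualnorm H y.
Proof.
apply: (sup_upper_bound (Hdual_set_has_sup y)).
by exists 0; [exact: Hnorm0_le1 | rewrite mul0mx mxE].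
Qed.

Lemma Hdualnorm_sqr_le_quadf_invmx y : Hdualnorm H y ^+ 2 <= quadf (invmx A0) y.
Proof.
have Q_ge0 : 0 <= quadf (invmx A0) y.
  exact: le_trans (sqr_ge0 _) (dotmx_sqr_le_quadf_invmx y HA0 pdA0 trA0 Hnorm0_le1).
rewrite -(sqr_sqrtr Q_ge0) ler_pXn2r ?nnegrE ?sqrtr_ge0 ?Hdualnorm_ge0 //.
by apply: ge_sup (Hdual_set_has_sup y).1 _; exact: Hdual_set_ub.
Qed.

(* The unit vector y / |y| satisfies Hnorm <= 1 because Hnorm is dominated by the Euclidean norm. *)
Lemma sqnorm_le_Hdualnorm y : sqnorm y <= Hdualnorm H y ^+ 2.
Proof.
have [y0|y_neq0] := eqVneq y 0.
  by rewrite y0 /sqnorm mul0mx mxE sqr_ge0.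
set r := Num.sqrt (sqnorm y).
have r_gt0 : 0 < r by rewrite sqrtr_gt0 sqnorm_gt0.
have r_sqr : r ^+ 2 = sqnorm y by rewrite sqr_sqrtr ?sqnorm_ge0.
have unit_le1 : Hnorm H (r^-1 *: y) <= 1.
  apply: le_trans (Hnorm_le_sqrt_sqnorm _) _.
  rewrite /sqnorm linearZ /= -scalemxAl -scalemxAr mxE mxE -/(sqnorm y) -r_sqr.
  by rewrite mulrA -expr2 -exprMn mulVf ?gt_eqF // expr1n sqrtr1.
have dot_r : ((r^-1 *: y) *m y^T) 0 0 = r.
  by rewrite -scalemxAl mxE -/(sqnorm y) -r_sqr expr2 mulKf ?gt_eqF.
rewrite -r_sqr ler_pXn2r ?nnegrE ?Hdualnorm_ge0 ?(ltW r_gt0) //.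
by apply: (sup_upper_bound (Hdual_set_has_sup y)); exists (r^-1 *: y).
Qed.

End PreconditionerNorms.

(* Unlike [ge0_le_integral], this needs no measurability: both integrals are
   suprema over the nonnegative simple functions below the integrand. *)
Lemma ge0_le_integralT (R : realType) (dsp : measure_display)
    (Omega : measurableType dsp) (mu : {measure set Omega -> \bar R})
    (g h : Omega -> \bar R) :
  (forall w, 0 <= g w)%E -> (forall w, g w <= h w)%E ->
  (\int[mu]_w g w <= \int[mu]_w h w)%E.
Proof.
move=> g_ge0 gh.
have h_ge0 w : (0 <= h w)%E by exact: le_trans (g_ge0 w) (gh w).
rewrite !ge0_integralTE //; apply: ereal_sup_le => _ [s sg <-].
by exists s => //= w; exact: le_trans (sg w) (gh w).
Qed.

Section VarianceComparison.
Variables (R : realType) (d : nat) (dsp : measure_display) (Omega : measurableType dsp).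
Variables (P : probability Omega R) (T : Type) (f : T -> Omega -> 'rV[R]_d -> R).

Lemma sigma2_norm_le_mat (N : 'rV[R]_d -> R) (A : 'M[R]_d) :
  (forall y, N y ^+ 2 <= quadf (invmx A) y) ->
  (sigma2_norm P f N <= sigma2_mat P f A)%E.
Proof.
move=> NA; apply: ge_ereal_sup => _ [t [x ->]].
apply: le_ereal_sup_tmp.
exists (\int[P]_w (quadf (invmx A) (cgrad P f t x w))%:E)%E; first by exists t, x.
by apply: ge0_le_integralT => w; rewrite lee_fin ?sqr_ge0 ?NA.
Qed.

Lemma measurable_sqnorm_cgrad t x :
  (forall i, P.-integrable setT (fun w => (grad (f t w) x 0 i)%:E)) ->
  measurable_fun setT (fun w => sqnorm (cgrad P f t x w)).
Proof.
move=> grad_int.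
have -> : (fun w => sqnorm (cgrad P f t x w)) =
          (fun w => \sum_j (grad (f t w) x 0 j - mean_grad P f t x 0 j) ^+ 2).
  by apply: funext => w; rewrite sqnorm_sum; apply: eq_bigr => j _; rewrite !mxE.
apply: measurable_sum => j /=.
under eq_fun do rewrite expr2.
have grad_j : measurable_fun setT (fun w => grad (f t w) x 0 j - mean_grad P f t x 0 j).
  apply: measurable_realfun.measurable_funB; last exact: measurable_cst.
  by have /integrableP[/measurable_realfun.measurable_EFinP] := grad_int j.
exact: measurable_realfun.measurable_funM.
Qed.

Lemma sigma2_mat_scalar_le (a : R) (N : 'rV[R]_d -> R) :
  0 <= a -> (forall y, sqnorm y <= N y ^+ 2) ->
  (forall t x, measurable_fun setT (fun w => sqnorm (cgrad P f t x w))) ->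
  (sigma2_mat P f (a^-1)%:M <= a%:E * sigma2_norm P f N)%E.
Proof.
move=> a_ge0 N_ge mcgrad; apply: ge_ereal_sup => _ [t [x ->]].
have -> : (fun w => (quadf (invmx (a^-1)%:M) (cgrad P f t x w))%:E) =
          (fun w => a%:E * (sqnorm (cgrad P f t x w))%:E)%E.
  by apply: funext => w; rewrite invmx_scalar invrK quadf_scalar EFinM.
rewrite ge0_integralZl //; last 2 first.
- exact/measurable_realfun.measurable_EFinP/mcgrad.
- by move=> w _; rewrite lee_fin sqnorm_ge0.
apply: lee_wpmul2l; first by rewrite lee_fin.
apply: le_trans (ereal_sup_ubound _); last by exists t, x.
by apply: ge0_le_integralT => w; rewrite lee_fin ?sqnorm_ge0 ?N_ge.
Qed.

End VarianceComparison.

Section WellStructured.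
Variables (R : realType) (d : nat) (H : set 'M[R]_d).
Hypothesis hH : well_structured H.

Lemma well_structured_psd A : H A -> psd A.
Proof. by case: hH => K [_ _ _ _ ->] []. Qed.

Lemma well_structured_scalar (a : R) : 0 <= a -> H a%:M.
Proof.
case: hH => K [K_scale _ _ K1 ->] a_ge0; split; first exact: psd_scalar.
by rewrite -scalemx1; exact: K_scale.
Qed.

End WellStructured.

Theorem proposition4p1 (R : realType) (d : nat) (H : set 'M[R]_d)
    (hH : well_structured H)
    (dsp : measure_display) (Omega : measurableType dsp)
    (P : probability Omega R) (T : Type) (f : T -> Omega -> 'rV[R]_d -> R)
    (hdiff : forall (t : T) (w : Omega) (x : 'rV[R]_d), differentiable (f t w) x)
    (hint : forall (t : T) (x : 'rV[R]_d) (i : 'I_d),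
       P.-integrable setT (fun w => (grad (f t w) x 0 i)%:E)) :
  (sigma2_norm P f (Hdualnorm H) <= sigma2_adaptive P f H)%E /\
  (sigma2_adaptive P f H <= d%:R%:E * sigma2_norm P f (Hdualnorm H))%E.
Proof.
have H_psd := well_structured_psd hH.
have H0 : H 0 by rewrite -(raddf0 (@scalar_mx R d)); exact: (well_structured_scalar hH).
have HA0 : H (d%:R^-1)%:M by apply: (well_structured_scalar hH); rewrite invr_ge0.
have [pdA0 trA0] := (pd_scalar_invdim R d, mxtrace_scalar_invdim R d).
split.
  apply/ereal_infP => _ [A [HA [pdA trA]] <-]; apply: sigma2_norm_le_mat => y.
  exact: Hdualnorm_sqr_le_quadf_invmx.
apply: le_trans (ereal_inf_lbound _) _; first by exists (d%:R^-1)%:M.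
apply: sigma2_mat_scalar_le => // [y | t x].
  exact: (sqnorm_le_Hdualnorm H_psd H0 HA0 pdA0 trA0).
exact: measurable_sqnorm_cgrad (hint t x).
Qed.
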